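(* Let $Y,X$ be locally compact Hausdorff spaces, $r\colon Y\to X$ continuous, and $\Lambda\colon C_c(Y)\to C_c(X)$ a positive linear map. Then $\Lambda(f)(x)=0$ for all $f\in C_c(Y)$ and $x\in X$ with $f|_{r^{-1}(x)}=0$ if and only if $\Lambda(f\cdot(g\circ r))=\Lambda(f)g$ for all $f\in C_c(Y)$ and $g\in C_c(X)$. *)

From HB Require Import structures.
From mathcomp Require Import all_boot all_order all_algebra.
From mathcomp.real_closed Require Export complex.
From mathcomp Require Import all_classical all_reals all_analysis.
Import Order.TTheory GRing.Theory Num.Theory.
Export ComplexField.
Export numFieldTopology.Exports numFieldNormedType.Exports.

Set Implicit Arguments.
Unset Strict Implicit.
Unset Printing Implicit Defensive.

Local Open Scope ring_scope.
Local Open Scope classical_set_scope.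

(* The usual (norm) topology on C = R[i], obtained from its
   numClosedFieldType structure exactly as MathComp-Analysis does for
   any numeric field. *)
HB.instance Definition _ (R : rcfType) := PseudoPointedMetric.copy R[i] R[i]^o.

Definition Cc (R : realType) (T : topologicalType) (f : T -> R[i]) : Prop :=
  continuous f /\ compact (closure [set t | f t != 0]).

(* Lam : C_c(Y) -> C_c(X) is a positive linear map.  Lam is given as a
   map on all functions Y -> C, but only its values on C_c(Y) matter. *)
Definition positive_linear_Cc (R : realType) (Y X : topologicalType)
    (Lam : (Y -> R[i]) -> (X -> R[i])) : Prop :=
  [/\ (forall f, Cc f -> Cc (Lam f)),
      (forall (a : R[i]) f g, Cc f -> Cc g ->
         Lam (fun y => a * f y + g y) = (fun x => a * Lam f x + Lam g x)) &
      (forall f, Cc f -> (forall y, 0 <= f y) -> forall x, 0 <= Lam f x)].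

(* If [Lam] is a [C_c(X)]-module map and [f] vanishes on the fibre over [x],
   take a cutoff [G] in [C_c(X)] with [G x = 0] and [G = 1] on the image under
   [r] of the compact set where [|f| >= e].  Then [Lam f x] equals
   [Lam (f - f * (G \o r)) x], and [|f - f * (G \o r)| <= e * phi] for an
   Urysohn function [phi] equal to [1] on the support of [f]; positivity gives
   [|Lam f x| <= 2 e Lam phi x] for every [e > 0].  Conversely, the module
   identity at [x] is the fibre condition applied to [f * (g \o r) - g x * f]. *)

From HB Require Import structures.
From mathcomp Require Import all_boot all_order all_algebra.
From mathcomp Require Import all_classical all_reals all_analysis.
From mathcomp Require Import lra.
Import Order.TTheory GRing.Theory Num.Theory.

Set Implicit Arguments.
Unset Strict Implicit.
Unset Printing Implicit Defensive.

Local Open Scope ring_scope.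
Local Open Scope classical_set_scope.

Section one_point_compactification_preimage.
Variable T : topologicalType.
Local Notation opc := (one_point_compactification T).

Lemma one_point_compactification_closed_preimage (S : set opc) :
  closed S -> ~ S None -> compact (Some @^-1` S).
Proof.
move=> clS nSN F PF FS.
have cS : compact S :=
  subclosed_compact clS one_point_compactification_compact (@subsetT _ S).
have [[q|] [Sq clq]] := cS _ (fmap_proper_filter Some PF) FS; last by [].
exists q; split => // A B FA nB.
have SomeA : (Some @ F) (Some @` A).
  exact: filterS (@preimage_image _ _ Some A) FA.
have [_ [[a Aa <-] [b Bb [ba]]]] :=
  clq _ _ SomeA (@one_point_compactification_some_nbhs _ q B nB).
by exists a; split => //; rewrite -ba.
Qed.

End one_point_compactification_preimage.

Lemma one_point_compactification_urysohn (R : realType) (T : topologicalType)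
    (C A : set T) :
  hausdorff_space T -> locally_compact [set: T] ->
  compact C -> closed A -> C `&` A = set0 ->
  exists F : one_point_compactification T -> R,
    [/\ continuous F, (forall p, 0 <= F p <= 1), F None = 0,
        (forall t, C t -> F (Some t) = 1) & (forall t, A t -> F (Some t) = 0)].
Proof.
move=> hT lcT cC clA CA0.
pose opc := one_point_compactification T.
have hO : hausdorff_space opc := one_point_compactification_hausdorff lcT hT.
have nO : normal_space opc :=
  compact_normal hO (@one_point_compactification_compact T).
pose A' : set opc := ~` (Some @` ~` A).
pose C' : set opc := Some @` C.
have clA' : closed A'.
  exact/open_closedC/one_point_compactification_open_some/closed_openC.
have clC' : closed C'.
  apply: (compact_closed hO); apply: continuous_compact => //.
  exact/continuous_subspaceT/one_point_compactification_some_continuous.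
have A'C' : A' `&` C' = set0.
  apply/seteqP; split => // p [nAp [c Cc cp]]; apply: nAp.
  by exists c => //= Ac; have : (C `&` A) c by []; rewrite CA0.
have [F [cF F01 FA FC]] := (@uniform_separatorP _ R A' C').1
  ((@normal_separatorP R opc).1 nO A' C' clA' clC' A'C').
exists F; split => //.
- by move=> p; have := F01 (F p) (ex_intro2 _ _ p I erefl); rewrite /= in_itv.
- by apply: FA; exists None => //= -[].
- by move=> t Ct; apply: FC; exists (Some t) => //; exists t.
- by move=> t At; apply: FA; exists (Some t) => // -[t' nA [e]]; apply: nA; rewrite e.
Qed.

Lemma compact_support_urysohn (R : realType) (T : topologicalType) (C A : set T) :
  hausdorff_space T -> locally_compact [set: T] ->
  compact C -> closed A -> C `&` A = set0 ->
  exists g : T -> R, [/\ continuous g, compact (closure [set t | g t != 0]),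
    (forall t, 0 <= g t <= 1), (forall t, C t -> g t = 1) &
    (forall t, A t -> g t = 0)].
Proof.
move=> hT lcT cC clA CA0.
have [F [cF F01 FN FC FA]] := one_point_compactification_urysohn R hT lcT cC clA CA0.
have FSome_cont : continuous (F \o Some).
  move=> t; apply: continuous_comp; last exact: cF.
  exact: one_point_compactification_some_continuous.
(* Shifting [F] down by [1/2] keeps the support away from the point at infinity. *)
pose g t := Num.max 0 (2 * F (Some t) - 1).
exists g; split.
- move=> t; apply: (@continuous_max R T (fun=> 0) (fun t => 2 * F (Some t) - 1)).
    exact: cvg_cst.
  by apply: cvgB; [apply: cvgM; [exact: cvg_cst | exact: FSome_cont] | exact: cvg_cst].
- pose S := F @^-1` [set s | 2^-1 <= s].
  have cS : compact (Some @^-1` S).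
    apply: one_point_compactification_closed_preimage; last by rewrite /S /= FN; lra.
    by apply: closed_comp => [p _|]; [exact: cF | exact: closed_ge].
  apply: (subclosed_compact (@closed_closure _ _) cS).
  have clS : closed (Some @^-1` S).
    by apply: closed_comp => [t _|]; [exact: FSome_cont | exact: closed_ge].
  move/closure_id: clS => ->; apply: closureS => t /=.
  by rewrite /g /S /= maxEle; case: ifP => h; rewrite ?eqxx // => _; move: h; lra.
- by move=> t; have := F01 (Some t); rewrite /g maxEle; case: ifP => h; lra.
- by move=> t /FC; rewrite /g maxEle => ->; case: ifP => h; lra.
- by move=> t /FA; rewrite /g maxEle => ->; case: ifP => h; lra.
Qed.

Section complex_continuity.
Variables (R : realType) (T : topologicalType).
Implicit Types f g : T -> R[i].

(* The topology of [R[i]] is that of [R[i]^o] only up to unfolding, so the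
   library lemmas are instantiated at [R[i]^o] and closed by conversion. *)

Lemma continuousC_add f g :
  continuous f -> continuous g -> continuous (fun t => f t + g t).
Proof. by move=> cf cg t; have := @continuousD R[i] R[i]^o T f g t (cf t) (cg t). Qed.

Lemma continuousC_sub f g :
  continuous f -> continuous g -> continuous (fun t => f t - g t).
Proof. by move=> cf cg t; have := @continuousB R[i] R[i]^o T f g t (cf t) (cg t). Qed.

Lemma continuousC_mul f g :
  continuous f -> continuous g -> continuous (fun t => f t * g t).
Proof. by move=> cf cg t; apply: cvgM; [exact: cf | exact: cg]. Qed.

Lemma continuousC_scale (a : R[i]) g : continuous g -> continuous (fun t => a * g t).
Proof. by move=> cg t; have := cvgM (cvg_cst a) (cg t); exact. Qed.

End complex_continuity.

Lemma realC_continuous (R : realType) : continuous (fun s : R => (s%:C)%C : R[i]).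
Proof.
move=> s; apply/(@cvgrPdist_lt R[i] R[i]^o) => e e0.
have /andP[/eqP Ie Re0] : (complex.Im e == complex.Im 0) && (complex.Re 0 < complex.Re e).
  by rewrite -ltcE.
near=> t; rewrite -rmorphB normc_def /= expr0n /= addr0 sqrtr_sqr ltcE /= Ie eqxx /=.
by near: t; exact: (@cvgr_dist_lt R R^o R (nbhs s) _ id s cvg_id _ Re0).
Unshelve. all: by end_near.
Qed.

Lemma conjC_continuous (R : realType) : continuous (fun z : R[i] => z^*).
Proof.
move=> z; apply/(@cvgrPdist_lt R[i] R[i]^o R[i] (nbhs z) _ (fun z => z^*)) => e e0.
by exists e => // w /= zw; rewrite -rmorphB norm_conjC.
Qed.

Lemma ReC_continuous (R : realType) : continuous (fun z : R[i] => 'Re z).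
Proof.
have -> : (fun z : R[i] => 'Re z) = (fun z => (z + z^*) * 2%:R^-1).
  by apply: funext => z; rewrite ReE.
move=> z; exact: (cvgM (cvgD cvg_id (@conjC_continuous R z)) (cvg_cst _)).
Qed.

Lemma ImC_continuous (R : realType) : continuous (fun z : R[i] => 'Im z).
Proof.
have -> : (fun z : R[i] => 'Im z) = (fun z => 'i * (z^* - z) * 2%:R^-1).
  by apply: funext => z; rewrite ImE.
move=> z.
exact: (cvgM (cvgM (cvg_cst _) (cvgB (@conjC_continuous R z) cvg_id)) (cvg_cst _)).
Qed.

Section Cc_closure.
Variables (R : realType) (T : topologicalType).
Implicit Types f g h : T -> R[i].

Lemma Cc_subsupport2 f g h : Cc f -> Cc g -> continuous h ->
  (forall t, f t = 0 -> g t = 0 -> h t = 0) -> Cc h.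
Proof.
move=> [_ cf] [_ cg] ch hz; split => //.
apply: (subclosed_compact (@closed_closure _ _) (compactU cf cg)).
have clU : closed (closure [set t | f t != 0] `|` closure [set t | g t != 0]).
  by apply: closedU; exact: closed_closure.
move/closure_id : clU => ->; apply: closureS => t /= ht.
have [ft|ft] := eqVneq (f t) 0; last by left; apply: subset_closure.
have [gt|gt] := eqVneq (g t) 0; last by right; apply: subset_closure.
by move: ht; rewrite hz ?eqxx.
Qed.

Lemma Cc_subsupport f h :
  Cc f -> continuous h -> (forall t, f t = 0 -> h t = 0) -> Cc h.
Proof. by move=> cf ch hz; apply: (Cc_subsupport2 cf cf ch) => t /hz. Qed.

Lemma Cc0 : Cc (fun _ : T => 0 : R[i]).
Proof.
split; first exact: cst_continuous.
rewrite (_ : [set t | _] = set0) ?closure0; first exact: compact0.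
by apply/seteqP; split => t //=; rewrite eqxx.
Qed.

Lemma CcD f g : Cc f -> Cc g -> Cc (fun t => f t + g t).
Proof.
move=> cf cg; apply: (Cc_subsupport2 cf cg) => [|t -> ->]; last by rewrite addr0.
by apply: continuousC_add; [case: cf | case: cg].
Qed.

Lemma CcB f g : Cc f -> Cc g -> Cc (fun t => f t - g t).
Proof.
move=> cf cg; apply: (Cc_subsupport2 cf cg) => [|t -> ->]; last by rewrite subr0.
by apply: continuousC_sub; [case: cf | case: cg].
Qed.

Lemma CcMr f g : Cc f -> continuous g -> Cc (fun t => f t * g t).
Proof.
move=> cf cg; apply: (Cc_subsupport cf) => [|t ->]; last by rewrite mul0r.
by apply: continuousC_mul => //; case: cf.
Qed.

Lemma CcZ (a : R[i]) f : Cc f -> Cc (fun t => a * f t).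
Proof.
move=> cf; apply: (Cc_subsupport cf) => [|t ->]; last by rewrite mulr0.
by apply: continuousC_scale; case: cf.
Qed.

Lemma Cc_urysohn (C A : set T) :
  hausdorff_space T -> locally_compact [set: T] ->
  compact C -> closed A -> C `&` A = set0 ->
  exists g : T -> R[i], [/\ Cc g, (forall t, 0 <= g t <= 1),
    (forall t, C t -> g t = 1) & (forall t, A t -> g t = 0)].
Proof.
move=> hT lcT cC clA CA0.
have [g [cg cK g01 gC gA]] := compact_support_urysohn R hT lcT cC clA CA0.
exists (fun t => (g t)%:C%C); split.
- split; first by move=> t; exact: (continuous_comp (cg t) (@realC_continuous R _)).
  by rewrite (_ : [set t | _] = [set t | g t != 0]) //; apply/seteqP; split => t /=;
    rewrite fmorph_eq0.
- by move=> t; rewrite ler0c lecR; case/andP: (g01 t) => -> ->.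
- by move=> t /gC ->.
- by move=> t /gA ->.
Qed.

End Cc_closure.

Section positive_linear_map.
Variables (R : realType) (Y X : topologicalType).
Variable Lam : (Y -> R[i]) -> (X -> R[i]).
Hypothesis LamP : positive_linear_Cc Lam.

Lemma Lam_ge0 f : Cc f -> (forall y, 0 <= f y) -> forall x, 0 <= Lam f x.
Proof. by case: LamP => _ _; apply. Qed.

Lemma Lam_lin (a : R[i]) f g : Cc f -> Cc g ->
  Lam (fun y => a * f y + g y) = (fun x => a * Lam f x + Lam g x).
Proof. by case: LamP => _ + _; apply. Qed.

Lemma Lam0 : Lam (fun _ => 0) = (fun _ => 0).
Proof.
have := Lam_lin 1 (Cc0 R Y) (Cc0 R Y); under eq_fun do rewrite mulr0 addr0.
move=> e; apply: funext => x; have := congr1 (fun F => F x) e => /=.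
by rewrite mul1r -{1}[Lam _ x]add0r => /addIr <-.
Qed.

Lemma LamZ (a : R[i]) f : Cc f -> Lam (fun y => a * f y) = (fun x => a * Lam f x).
Proof.
move=> cf; have := Lam_lin a cf (Cc0 R Y); rewrite Lam0.
under eq_fun do rewrite addr0.
by move=> ->; apply: funext => x; rewrite addr0.
Qed.

Lemma LamD f g : Cc f -> Cc g -> Lam (fun y => f y + g y) = (fun x => Lam f x + Lam g x).
Proof.
move=> cf cg; have := Lam_lin 1 cf cg; under eq_fun do rewrite mul1r.
by move=> ->; apply: funext => x; rewrite mul1r.
Qed.

Lemma LamB f g : Cc f -> Cc g -> Lam (fun y => f y - g y) = (fun x => Lam f x - Lam g x).
Proof.
move=> cf cg; have := Lam_lin (-1) cg cf; under eq_fun do rewrite mulN1r addrC.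
by move=> ->; apply: funext => x; rewrite mulN1r addrC.
Qed.

Lemma Lam_norm_le_real u p : Cc u -> Cc p -> (forall y, u y \is Num.real) ->
  (forall y, `|u y| <= p y) -> forall x, `|Lam u x| <= Lam p x.
Proof.
move=> cu cp ur up x.
have pmu : 0 <= Lam p x - Lam u x.
  rewrite -[_ - _]/((fun x => Lam p x - Lam u x) x) -(LamB cp cu).
  apply: Lam_ge0 => [|y]; first exact: CcB.
  by have := up y; rewrite real_ler_norml // => /andP[_ ?]; rewrite subr_ge0.
have ppu : 0 <= Lam p x + Lam u x.
  rewrite -[_ + _]/((fun x => Lam p x + Lam u x) x) -(LamD cp cu).
  apply: Lam_ge0 => [|y]; first exact: CcD.
  have := up y; rewrite real_ler_norml // => /andP[? _].
  by rewrite -[u y]opprK subr_ge0 lerNl.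
have Lu_real : Lam u x \is Num.real.
  have -> : Lam u x = Lam p x - (Lam p x - Lam u x) by rewrite subKr.
  rewrite rpredB ?ger0_real //.
  by apply: Lam_ge0 => // y; exact: le_trans (normr_ge0 _) (up y).
rewrite real_ler_norml //; apply/andP; split; rewrite -subr_ge0 //.
by rewrite opprK addrC.
Qed.

Lemma Lam_norm_le h p : Cc h -> Cc p ->
  (forall y, `|h y| <= p y) -> forall x, `|Lam h x| <= Lam p x *+ 2.
Proof.
move=> ch cp hp x; have [ch_cont _] := ch.
pose u y := 'Re (h y); pose v y := 'Im (h y).
have cu : Cc u.
  apply: (Cc_subsupport ch) => [y|y hy]; last by rewrite /u hy raddf0.
  exact: (continuous_comp (ch_cont y) (@ReC_continuous R _)).
have cv : Cc v.
  apply: (Cc_subsupport ch) => [y|y hy]; last by rewrite /v hy raddf0.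
  exact: (continuous_comp (ch_cont y) (@ImC_continuous R _)).
have -> : h = (fun y => 'i * v y + u y).
  by apply: funext => y; rewrite /u /v addrC -Crect.
rewrite (Lam_lin _ cv cu) mulr2n addrC.
apply: le_trans (ler_normD _ _) _; rewrite normrM normCi mul1r.
apply: lerD; apply: Lam_norm_le_real => // y.
- exact: Creal_Re.
- by apply: le_trans (hp y); case: (leif_normC_Re_Creal (h y)).
- exact: Creal_Im.
- apply: le_trans (hp y); rewrite /v -[X in `|X|]opprK -ReMil normrN.
  by case: (leif_normC_Re_Creal ('i * h y)); rewrite normrM normCi mul1r.
Qed.

End positive_linear_map.

Lemma le0_of_le_mul_gt0 (F : numFieldType) (a c : F) :
  0 <= c -> (forall e, 0 < e -> a <= e * c) -> a <= 0.
Proof.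
move=> c0 ale; apply/ler_addgt0Pr => z z0; rewrite add0r.
have c1 : 0 < c + 1 by rewrite ltr_wpDl.
apply: le_trans (ale _ (divr_gt0 z0 c1)) _.
by rewrite -mulrA ler_piMr ?ltW // mulrC ltr_pdivrMr // mul1r ltrDl.
Qed.

Section fibres.
Variables (R : realType) (Y X : topologicalType) (r : Y -> X).
Implicit Types (Lam : (Y -> R[i]) -> (X -> R[i])) (f : Y -> R[i]) (g : X -> R[i]).

Definition vanishes_off_fibres Lam := forall f x, Cc f ->
  (forall y, r y = x -> f y = 0) -> Lam f x = 0.

Definition Cc_module_map Lam := forall f g, Cc f -> Cc g ->
  Lam (fun y => f y * g (r y)) = (fun x => Lam f x * g x).

Hypothesis r_cont : continuous r.

Lemma CcM_comp f g : Cc f -> continuous g -> Cc (fun y => f y * g (r y)).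
Proof.
move=> cf g_cont; apply: CcMr => // y.
by apply: continuous_comp; [exact: r_cont | exact: g_cont].
Qed.

Lemma Cc_module_map_of_vanishes Lam : positive_linear_Cc Lam ->
  vanishes_off_fibres Lam -> Cc_module_map Lam.
Proof.
move=> LamP van f g cf [g_cont _]; apply: funext => x.
have cfg := CcM_comp cf g_cont.
have fib y : r y = x -> - g x * f y + f y * g (r y) = 0.
  by move=> <-; rewrite mulNr mulrC addNr.
have := van _ x (CcD (CcZ (- g x) cf) cfg) fib.
rewrite (Lam_lin LamP _ cf cfg) /= mulNr addrC => /eqP; rewrite subr_eq0 => /eqP ->.
exact: mulrC.
Qed.

Hypotheses (hX : hausdorff_space X) (lcX : locally_compact [set: X]).

Lemma fibre_cutoff f x e : Cc f -> (forall y, r y = x -> f y = 0) -> 0 < e ->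
  exists G : X -> R[i], [/\ Cc G, G x = 0 & forall y, `|f y - f y * G (r y)| <= e].
Proof.
move=> [f_cont cKf] fib e0.
pose K := f @^-1` ~` ball (0 : R[i]) e.
have Kf y : K y -> f y != 0.
  by move=> Ky; apply/eqP => fy0; apply: Ky; rewrite fy0; exact: ballxx.
have cK : compact K.
  apply: (subclosed_compact _ cKf) => [|y /Kf fy]; last exact: subset_closure.
  apply: closed_comp => [y _|]; first exact: f_cont.
  exact/open_closedC/(@ball_open R[i] R[i]^o).
have rKx : r @` K `&` [set x] = set0.
  apply/seteqP; split => // _ [[y Ky <-] ryx].
  by move: (Kf y Ky); rewrite fib ?eqxx.
have [G [cG G01 GK Gx]] := Cc_urysohn R hX lcX
  (continuous_compact (continuous_subspaceT r_cont) cK)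
  (@accessible_closed_set1 X (hausdorff_accessible hX) x) rKx.
exists G; split => // [|y]; first exact: Gx.
rewrite -{1}[f y]mulr1 -mulrBr normrM.
have [Ky|nKy] := pselect (K y).
  by rewrite GK ?subrr ?normr0 ?mulr0 ?ltW //; exists y.
have fye : `|f y| < e by move/contrapT: nKy; rewrite /ball /= sub0r normrN.
have G1 : `|1 - G (r y)| <= 1.
  case/andP: (G01 (r y)) => G0 G1.
  by rewrite ger0_norm ?subr_ge0 // lerBlDr lerDl.
by apply: le_trans (ltW fye); rewrite ler_piMr.
Qed.

Hypotheses (hY : hausdorff_space Y) (lcY : locally_compact [set: Y]).

Lemma vanishes_of_Cc_module_map Lam : positive_linear_Cc Lam ->
  Cc_module_map Lam -> vanishes_off_fibres Lam.
Proof.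
move=> LamP modL f x cf fib; have [_ cKf] := cf.
have [phi [cphi phi01 phi1 _]] := Cc_urysohn R hY lcY cKf (@closed0 Y) (setI0 _).
have phi0 y : 0 <= phi y by case/andP: (phi01 y).
apply/eqP; rewrite -normr_le0.
apply: (@le0_of_le_mul_gt0 _ _ (Lam phi x *+ 2)) => [|e e0].
  by rewrite mulrn_wge0 // (Lam_ge0 LamP).
have [G [cG Gx fG]] := fibre_cutoff cf fib e0.
have cfG := CcM_comp cf cG.1.
have <- : Lam (fun y => f y - f y * G (r y)) x = Lam f x.
  by rewrite (LamB LamP cf cfG) modL // Gx mulr0 subr0.
rewrite mulrnAr -[e * _]/((fun x => e * Lam phi x) x) -(LamZ LamP _ cphi).
apply: (Lam_norm_le LamP (CcB cf cfG) (CcZ e cphi)) => y.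
have [fy0|fy0] := eqVneq (f y) 0.
  by rewrite fy0 mul0r subrr normr0 mulr_ge0 // ltW.
by rewrite phi1 ?mulr1 //; exact: subset_closure.
Qed.

End fibres.

Theorem lemma2p1 (R : realType) (Y X : topologicalType)
  (hY : hausdorff_space Y) (lcY : locally_compact [set: Y])
  (hX : hausdorff_space X) (lcX : locally_compact [set: X])
  (r : Y -> X) (rcont : continuous r)
  (Lam : (Y -> R[i]) -> (X -> R[i])) (Lpos : positive_linear_Cc Lam) :
  (forall (f : Y -> R[i]) (x : X), Cc f ->
     (forall y, r y = x -> f y = 0) -> Lam f x = 0)
  <->
  (forall (f : Y -> R[i]) (g : X -> R[i]), Cc f -> Cc g ->
     Lam (fun y => f y * g (r y)) = (fun x => Lam f x * g x)).
Proof.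
split; first exact: Cc_module_map_of_vanishes.
exact: vanishes_of_Cc_module_map.
Qed.
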